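(* Let $H$ be a separable real Hilbert space and $T>0$. On the space of $H$-valued, adapted, càdlàg processes on $[0,T]$, define $$\rho^{\mathrm{em}}_T(X,Y)=\sup_{\Gamma\in\mathcal S^{1,\mathrm{op}}_{\mathrm{prd}}}E\Big[\Big\|\Gamma(0)(X-Y)(0)+\int_{(0,T]}\Gamma(s)\,\mathrm d(X-Y)(s)\Big\|\wedge1\Big].$$ Then $\rho^{\mathrm{em}}_T$ and $d^{\mathrm{em}}_T$ generate the same topology on this space.
   Context: The filtered probability space $(\Omega,\mathcal A,(\mathcal F_t),P)$ is complete. $\mathcal S^{1,\mathrm{op}}_{\mathrm{prd}}=\mathcal S^{1,\mathrm{op}}_{\mathrm{prd}}(H)$ is the set of processes $\Gamma(\omega,t)=\Gamma_0(\omega)1_{\{0\}}(t)+\sum_{i=1}^{n-1}\big(\sum_{k=1}^{N(i)}O_{i,k}1_{A_{i,k}}(\omega)\big)1_{(t_i,t_{i+1}]}(t)$, where $\Gamma_0$ is an $\mathcal F_0$-measurable $L(H)$-valued random variable, $0=t_1<\dots<t_n=T$, $A_{i,k}\in\mathcal F_{t_i}$, $O_{i,k}\in L(H)$, and $\sup_{(\omega,t)}\|\Gamma(\omega,t)\|_{H\to H}\le1$. For an $H$-valued càdlàg process $X$, $\int_{(0,t]}\Gamma\,\mathrm dX:=\sum_{i=1}^{n-1}\big(\sum_kO_{i,k}1_{A_{i,k}}\big)(X(t_{i+1}\wedge t)-X(t_i\wedge t))$, and $d^{\mathrm{em}}_T(X,Y)=\sup_{\Gamma\in\mathcal S^{1,\mathrm{op}}_{\mathrm{prd}}}E\big[\sup_{t\in[0,T]}\|\Gamma(0)(X-Y)(0)+\int_{(0,t]}\Gamma\,\mathrm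 d(X-Y)\|\wedge1\big]$. *)

From mathcomp Require Import all_boot all_order all_algebra.
From mathcomp Require Import all_classical all_reals all_analysis.
Import Order.TTheory GRing.Theory Num.Theory numFieldNormedType.Exports.

Set Implicit Arguments.
Unset Strict Implicit.
Unset Printing Implicit Defensive.

Local Open Scope classical_set_scope.
Local Open Scope ring_scope.

Section Hilbert.
Context {R : realType} {H : normedModType R}.

Definition is_inner_product (ip : H -> H -> R) : Prop :=
  [/\ (forall x y, ip x y = ip y x),
      (forall (a : R) x y z, ip (a *: x + y) z = a * ip x z + ip y z) &
      (forall x, `|x| ^+ 2 = ip x x)].

Definition separable_space : Prop :=
  exists D : set H, countable D /\ closure D = setT.

Definition is_linear_map (O : H -> H) : Prop :=
  forall (a : R) x y, O (a *: x + y) = a *: O x + O y.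

Definition is_bounded_op (O : H -> H) : Prop :=
  is_linear_map O /\ exists C : R, forall x, `|O x| <= C * `|x|.

Definition op_norm_le1 (O : H -> H) : Prop := forall x, `|O x| <= `|x|.
End Hilbert.

Section Stoch.
Context {R : realType} {H : normedModType R}.
Context {d : measure_display} {Omega : measurableType d}.

Definition meas_wrt (G : set (set Omega)) (f : Omega -> H) : Prop :=
  forall U : set H, open U -> G (f @^-1` U).

Definition is_filtration (F : R -> set (set Omega)) : Prop :=
  [/\ (forall t, sigma_algebra setT (F t)),
      (forall t, F t `<=` measurable) &
      (forall s t, s <= t -> F s `<=` F t)].

Definition complete_fps (P : probability Omega R) (F : R -> set (set Omega)) : Prop :=
  (forall N, P.-negligible N -> measurable N) /\
  (forall N, P.-negligible N -> F 0 N).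

Definition adapted_cadlag (F : R -> set (set Omega)) (T : R)
  (X : Omega -> R -> H) : Prop :=
  (forall t, 0 <= t <= T -> meas_wrt (F t) (fun w => X w t)) /\
  (forall w,
     (forall t, 0 <= t < T -> (X w s @[s --> t^'+]) --> X w t) /\
     (forall t, 0 < t <= T -> cvg (X w s @[s --> t^'-]))).

(** data of an element of S^{1,op}_prd.  Indices are 0-based:
    times t_1 < ... < t_n are [sp_t 0 < ... < sp_t (sp_n - 1)]. *)
Record simple_prd := SimplePrd {
  sp_G0 : Omega -> H -> H;
  sp_n : nat;
  sp_t : nat -> R;
  sp_N : nat -> nat;
  sp_O : nat -> nat -> H -> H;
  sp_A : nat -> nat -> set Omega }.

(** value of Gamma on (t_i, t_{i+1}] at w, applied to h *)
Definition sp_op (G : simple_prd) (i : nat) (w : Omega) (h : H) : H :=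
  \sum_(k < sp_N G i) (\1_(sp_A G i k) w : R) *: sp_O G i k h.

Definition is_simple_prd (F : R -> set (set Omega)) (T : R) (G : simple_prd) : Prop :=
  [/\ (forall w, is_linear_map (sp_G0 G w) /\ op_norm_le1 (sp_G0 G w)),
      (forall h, meas_wrt (F 0) (fun w => sp_G0 G w h)),
      [/\ (0 < sp_n G)%N, sp_t G 0 = 0, sp_t G (sp_n G).-1 = T &
          forall i, (i.+1 < sp_n G)%N -> sp_t G i < sp_t G i.+1],
      (forall i k, (i.+1 < sp_n G)%N -> (k < sp_N G i)%N ->
          is_bounded_op (sp_O G i k) /\ F (sp_t G i) (sp_A G i k)) &
      (forall w i, (i.+1 < sp_n G)%N -> op_norm_le1 (sp_op G i w))].

(** int_{(0,t]} Gamma dZ, pathwise *)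
Definition sp_int (G : simple_prd) (Z : Omega -> R -> H) (w : Omega) (t : R) : H :=
  \sum_(i < (sp_n G).-1)
     sp_op G i w (Z w (Num.min (sp_t G i.+1) t) - Z w (Num.min (sp_t G i) t)).

Definition sp_path (G : simple_prd) (Z : Omega -> R -> H) (w : Omega) (t : R) : H :=
  sp_G0 G w (Z w 0) + sp_int G Z w t.

Definition proc_diff (X Y : Omega -> R -> H) : Omega -> R -> H :=
  fun w s => X w s - Y w s.

Local Open Scope ereal_scope.

Definition d_em (P : probability Omega R) (F : R -> set (set Omega)) (T : R)
  (X Y : Omega -> R -> H) : \bar R :=
  ereal_sup [set (\int[P]_w
      ereal_sup [set (Num.min `|sp_path G (proc_diff X Y) w t| 1)%:E
                 | t in [set t | (0 <= t <= T)%R]])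
    | G in [set G | is_simple_prd F T G]].

Definition rho_em (P : probability Omega R) (F : R -> set (set Omega)) (T : R)
  (X Y : Omega -> R -> H) : \bar R :=
  ereal_sup [set (\int[P]_w (Num.min `|sp_path G (proc_diff X Y) w T| 1)%:E)
    | G in [set G | is_simple_prd F T G]].

Local Close Scope ereal_scope.
End Stoch.

Definition dist_open {R : realType} {E : Type} (S : set E)
  (dist : E -> E -> \bar R) (U : set E) : Prop :=
  forall x, S x -> U x ->
    exists r : R, (0 < r)%R /\
      forall y, S y -> (dist x y < r%:E)%E -> U y.

From mathcomp Require Import all_boot all_order all_algebra.
From mathcomp Require Import all_classical all_reals all_analysis.
From mathcomp Require Import ring lra measurable_realfun.
Import Order.TTheory GRing.Theory Num.Theory numFieldNormedType.Exports.

(* [rho_em <= d_em] because the supremum over [0, T] dominates the value at [T].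
   Conversely [d_em <= dl + rho_em / dl] for [0 < dl <= 1].  Given an admissible
   integrand, refine its partition into [M] equal steps per cell and switch it off
   from the first grid point where [|Gamma . (X - Y)|] exceeds [dl]: the result is
   again admissible and exceeds [dl] at time [T] whenever some grid point does, so by
   Markov's inequality such a grid exceedance has probability at most [rho_em / dl].
   By right continuity an exceedance anywhere in [0, T] is seen by all fine enough
   grids.  Separability of [H] makes the stopping events [F t]-measurable, which is
   what keeps the stopped integrand predictable. *)

Set Implicit Arguments.
Unset Strict Implicit.
Unset Printing Implicit Defensive.

Local Open Scope classical_set_scope.
Local Open Scope ring_scope.

Section NormedSpace.
Context {R : realType} {H : normedModType R}.

Definition dense_seq (e : nat -> H) : Prop :=
  forall x (eps : R), 0 < eps -> exists n, `|x - e n| < eps.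

Lemma separable_dense_seq : @separable_space R H -> exists e, dense_seq e.
Proof.
move=> [D [cD clD]].
have [f finj] := countable_injP _ cD.
have closureD x eps : 0 < eps -> exists2 a, D a & `|x - a| < eps.
  move=> eps0; have : closure D x by rewrite clD.
  move=> /(_ _ (nbhsx_ballx x eps eps0)) [a [Da xa]].
  by exists a => //; move: xa; rewrite -ball_normE.
have [x0 Dx0 _] := closureD 0 1 ltr01.
exists (fun n => xget x0 [set a | D a /\ f a = n]) => x eps eps0.
have [a Da xa] := closureD x eps eps0.
exists (f a); suff -> : xget x0 [set b | D b /\ f b = f a] = a by [].
apply: xget_unique => [//|b [Db fb]].
by apply: finj; rewrite ?inE.
Qed.

Lemma open_normP (A : set H) :
  open A <-> forall x, A x -> exists2 e : R, 0 < e & forall y, `|x - y| < e -> A y.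
Proof.
split=> [oA x Ax|hA].
  have /nbhs_ballP [e e0 Ae] : nbhs x A by apply: open_nbhs_nbhs.
  by exists e => // y xy; apply: Ae; rewrite -ball_normE.
rewrite openE => x Ax; apply/nbhs_ballP.
by have [e e0 Ae] := hA x Ax; exists e => // y; rewrite -ball_normE; apply: Ae.
Qed.

Lemma open_norm_gt (r : R) : open [set v : H | r < `|v|].
Proof.
apply/open_normP => v /= rv; exists (`|v| - r); first by rewrite subr_gt0.
move=> y vy; have := ler_normD (v - y) y; rewrite subrK; lra.
Qed.

Lemma linear_mapB (O : H -> H) : is_linear_map O -> forall h h', O (h - h') = O h - O h'.
Proof.
by move=> linO h h'; rewrite addrC -scaleN1r linO scaleN1r addrC.
Qed.

End NormedSpace.

Section SigmaAlgebra.
Context {T : pointedType} (G : set (set T)) (sG : sigma_algebra setT G).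
Let GE := measurable_g_measurableTypeE sG.

Lemma sigma_algebraT : G setT.
Proof. by rewrite -GE; exact: measurableT. Qed.

Lemma sigma_algebraI A B : G A -> G B -> G (A `&` B).
Proof. by rewrite -GE; exact: measurableI. Qed.

Lemma sigma_algebraU A B : G A -> G B -> G (A `|` B).
Proof. by rewrite -GE; exact: measurableU. Qed.

Lemma sigma_algebra_setC A : G A -> G (~` A).
Proof. by rewrite -GE; exact: measurableC. Qed.

Lemma sigma_algebra_bigcupT (A : (set T)^nat) : (forall n, G (A n)) -> G (\bigcup_n A n).
Proof. by rewrite -GE; exact: bigcupT_measurable. Qed.

End SigmaAlgebra.

Section MeasWrt.
Context {R : realType} {H : normedModType R} {d : measure_display} {Omega : measurableType d}.
Variable G : set (set Omega).
Hypothesis sG : sigma_algebra setT G.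
Implicit Types f g : Omega -> H.

Lemma meas_wrt_cst (c : H) : meas_wrt G (cst c).
Proof.
move=> U _; rewrite preimage_cst; case: ifP => _; first exact: sigma_algebraT.
by case: sG.
Qed.

Lemma meas_wrt_indic (A : set Omega) f :
  G A -> meas_wrt G f -> meas_wrt G (fun w => (\1_A w : R) *: f w).
Proof.
move=> GA mf U oU.
have -> : (fun w => (\1_A w : R) *: f w) @^-1` U =
    (A `&` f @^-1` U) `|` (~` A `&` cst 0 @^-1` U).
  apply/seteqP; split=> w /=; rewrite indicE.
    have [Aw|Aw] := pselect (A w).
      by rewrite mem_set // scale1r; left.
    by rewrite memNset // scale0r; right.
  by case=> -[Aw Uw]; [rewrite mem_set // scale1r | rewrite memNset // scale0r].
apply: sigma_algebraU => //; apply: sigma_algebraI => //; first exact: mf.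
  exact: sigma_algebra_setC.
exact: meas_wrt_cst.
Qed.

Variable e : nat -> H.
Hypothesis de : dense_seq e.

(* Each [K w] is 1-Lipschitz, so [K w (g w)] is approximated by [K w (e k)] for
   [e k] close to [g w]; this is where separability of [H] enters. *)
Lemma meas_wrt_comp_contract (K : Omega -> H -> H) g :
  (forall w h h', `|K w h - K w h'| <= `|h - h'|) ->
  (forall k, meas_wrt G (fun w => K w (e k))) ->
  meas_wrt G g -> meas_wrt G (fun w => K w (g w)).
Proof.
move=> Kcontr mK mg U oU.
pose r n : R := n.+1%:R^-1.
have r_gt0 n : 0 < r n by rewrite invr_gt0.
pose V n := \bigcup_(u in [set u | forall y, `|u - y| < r n + r n -> U y]) ball u (r n).
have -> : (fun w => K w (g w)) @^-1` U =
    \bigcup_n \bigcup_k (g @^-1` ball (e k) (r n) `&` (fun w => K w (e k)) @^-1` V n).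
  apply/seteqP; split=> w /=.
  - move=> /(open_normP U).1-/(_ oU) [eps eps0 Ueps].
    have [n _ /(_ n (leqnn n)) /= rn] :=
      near_infty_natSinv_lt (PosNum (divr_gt0 eps0 (ltr0n _ 2))).
    have [k gk] := de (g w) (r_gt0 n).
    exists n => //; exists k => //; split => /=.
      by rewrite -ball_normE /= distrC.
    exists (K w (g w)).
      move=> y hy; apply: Ueps; move: hy rn; rewrite /r; set x := _^-1; lra.
    by rewrite -ball_normE /= (le_lt_trans (Kcontr _ _ _)) // distrC.
  - move=> [n _ [k _ [/= gk [u /= Uu]]]]; rewrite -!ball_normE /= in gk *.
    move=> uK; apply: Uu; rewrite -(subrK (K w (e k)) u) -addrA.
    by rewrite (le_lt_trans (ler_normD _ _)) // ltrD // (le_lt_trans (Kcontr _ _ _)).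
apply: sigma_algebra_bigcupT => // n; apply: sigma_algebra_bigcupT => // k.
apply: sigma_algebraI => //; first by apply: mg; exact: ball_open.
by apply: mK; apply: bigcup_open => u _; exact: ball_open.
Qed.

Lemma meas_wrtD f g : meas_wrt G f -> meas_wrt G g -> meas_wrt G (fun w => f w + g w).
Proof.
move=> mf mg; apply: (meas_wrt_comp_contract (K := fun w h => f w + h)) => //.
  by move=> w h h'; rewrite opprD addrACA subrr add0r.
move=> k; apply: (meas_wrt_comp_contract (K := fun _ h => h + e k)) => //.
- by move=> _ h h'; rewrite opprD addrACA subrr addr0.
- by move=> ?; exact: meas_wrt_cst.
Qed.

Lemma meas_wrtN f : meas_wrt G f -> meas_wrt G (fun w => - f w).
Proof.
move=> mf; apply: (meas_wrt_comp_contract (K := fun _ h => - h)) => //.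
- by move=> _ h h'; rewrite -opprD normrN.
- by move=> ?; exact: meas_wrt_cst.
Qed.

Lemma meas_wrtB f g : meas_wrt G f -> meas_wrt G g -> meas_wrt G (fun w => f w - g w).
Proof. by move=> mf mg; apply: meas_wrtD => //; exact: meas_wrtN. Qed.

Lemma meas_wrt_sum N (f : nat -> Omega -> H) : (forall k, (k < N)%N -> meas_wrt G (f k)) ->
  meas_wrt G (fun w => \sum_(k < N) f k w).
Proof.
elim: N => [|N IH] mf.
  by under eq_fun do rewrite big_ord0; exact: meas_wrt_cst.
under eq_fun do rewrite big_ord_recr /=.
by apply: meas_wrtD; [apply: IH => k /ltnW; exact: mf | exact: mf].
Qed.

End MeasWrt.

Lemma meas_wrtS {R : realType} {H : normedModType R} {d} {Omega : measurableType d}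
    (G G' : set (set Omega)) (f : Omega -> H) :
  G `<=` G' -> meas_wrt G f -> meas_wrt G' f.
Proof. by move=> GG' mf U oU; apply: GG'; exact: mf. Qed.

Section SimplePrd.
Context {R : realType} {H : normedModType R} {d : measure_display} {Omega : measurableType d}.
Context (F : R -> set (set Omega)) (T : R) (Gm : @simple_prd R H d Omega).
Hypothesis hGm : is_simple_prd F T Gm.
Local Notation t := (sp_t Gm).
Local Notation n := (sp_n Gm).
Implicit Types (Z : Omega -> R -> H) (w : Omega) (h : H).

Lemma sp_t_lt i : (i.+1 < n)%N -> t i < t i.+1.
Proof. by case: hGm => _ _ [_ _ _ +] _ _; apply. Qed.

Lemma sp_t_le i j : (i <= j)%N -> (j < n)%N -> t i <= t j.
Proof.
elim: j => [|j IH]; first by rewrite leqn0 => /eqP ->.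
rewrite leq_eqVlt => /orP [/eqP -> //|ij] jn.
exact/(le_trans (IH ij (ltnW jn)))/ltW/sp_t_lt.
Qed.

Lemma sp_t_ge0 i : (i < n)%N -> 0 <= t i.
Proof. by case: hGm => _ _ [_ <- _ _] _ _; exact: sp_t_le. Qed.

Lemma sp_T_ge0 : 0 <= T.
Proof. by case: hGm => _ _ [n_gt0 _ <- _] _ _; rewrite sp_t_ge0 // ltn_predL. Qed.

Lemma sp_opB i w h h' : (i.+1 < n)%N ->
  sp_op Gm i w (h - h') = sp_op Gm i w h - sp_op Gm i w h'.
Proof.
case: hGm => _ _ _ hO _ i_lt; rewrite /sp_op -sumrB; apply: eq_bigr => k _.
by have [[linO _] _] := hO i k i_lt (ltn_ord k); rewrite linear_mapB // scalerBr.
Qed.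

Lemma sp_op0 i w : (i.+1 < n)%N -> sp_op Gm i w 0 = 0.
Proof. by move=> i_lt; have := @sp_opB i w 0 0 i_lt; rewrite !subrr. Qed.

Lemma sp_op_contract i w h h' : (i.+1 < n)%N ->
  `|sp_op Gm i w h - sp_op Gm i w h'| <= `|h - h'|.
Proof. by case: hGm => _ _ _ _ hn i_lt; rewrite -sp_opB //; exact: hn. Qed.

Lemma sp_G0_contract w h h' : `|sp_G0 Gm w h - sp_G0 Gm w h'| <= `|h - h'|.
Proof. by case: hGm => /(_ w) [linG0 normG0] _ _ _ _; rewrite -linear_mapB. Qed.

Lemma sp_path0 Z w : sp_path Gm Z w 0 = sp_G0 Gm w (Z w 0).
Proof.
rewrite /sp_path /sp_int big1 ?addr0 // => i _.
have i_lt : ((i : nat).+1 < n)%N by rewrite -ltn_predRL.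
by rewrite !min_r ?sp_t_ge0 // ?(ltnW i_lt) // subrr sp_op0.
Qed.

(* On [[t i, t i.+1]] only the [i]-th summand of [sp_int] varies. *)
Lemma sp_pathB Z w i u v : (i.+1 < n)%N -> t i <= u -> u <= v -> v <= t i.+1 ->
  sp_path Gm Z w v - sp_path Gm Z w u = sp_op Gm i w (Z w v - Z w u).
Proof.
move=> i_lt tu uv vt.
rewrite /sp_path opprD addrACA subrr add0r /sp_int -sumrB.
have i_lt' : (i < n.-1)%N by rewrite ltn_predRL.
rewrite (bigD1 (Ordinal i_lt')) //= big1 ?addr0.
  rewrite (min_r vt) (min_l (le_trans tu uv)) (min_r (le_trans uv vt)) (min_l tu).
  by rewrite -sp_opB // opprB addrA subrK.
move=> j /eqP neq_ji; have j_lt : ((j : nat).+1 < n)%N by rewrite -ltn_predRL.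
have tjS := sp_t_le (leqnSn j) j_lt.
have [ji|ij] := ltnP j i.
  have tju : t j.+1 <= u by apply: le_trans tu; exact: sp_t_le ji (ltnW i_lt).
  have tjv := le_trans tju uv.
  by rewrite !min_l ?subrr // (le_trans tjS).
have {}ij : (i < j)%N.
  by rewrite ltn_neqAle ij andbT; apply/eqP => eq_ij; apply: neq_ji; exact: val_inj.
have vtj : v <= t j by apply: le_trans vt _; exact: sp_t_le ij (ltnW j_lt).
have utj := le_trans uv vtj.
by rewrite !min_r ?subrr // (le_trans _ tjS).
Qed.

Lemma sp_interval s : 0 <= s < T -> exists i, [/\ (i.+1 < n)%N, t i <= s & s < t i.+1].
Proof.
move=> /andP[s_ge0 sT]; case: hGm => _ _ [n_gt0 t0 tT _] _ _.
have n1_gt0 : (0 < n.-1)%N.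
  by rewrite lt0n; apply: contraTneq sT => n1; rewrite -tT n1 t0 -leNgt.
pose P := [pred i | (i < n.-1)%N && (t i <= s)].
have exP : exists i, P i by exists 0%N; rewrite /P /= n1_gt0 t0.
have ubP i : P i -> (i <= n)%N.
  by move=> /andP[i_lt _]; rewrite (leq_trans (ltnW i_lt)) ?leq_pred.
have [i /andP[i_lt tis] maxi] := ex_maxnP exP ubP.
exists i; split=> //; first by rewrite -ltn_predRL.
have [iS_lt|] := ltnP i.+1 n.-1.
  rewrite ltNge; apply/negP => tiS.
  by have := maxi i.+1; rewrite /P /= iS_lt tiS ltnn => /(_ isT).
by rewrite leq_eqVlt ltnNge i_lt orbF => /eqP <-; rewrite tT.
Qed.

Section Grid.
Variable M : nat.
Hypothesis M_gt0 : (0 < M)%N.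

Definition sp_grid (j : nat) : R :=
  t (j %/ M) + (j %% M)%:R * (t (j %/ M).+1 - t (j %/ M)) / M%:R.

Lemma sp_gridE q r : (r <= M)%N ->
  sp_grid (q * M + r) = t q + r%:R * (t q.+1 - t q) / M%:R.
Proof.
rewrite leq_eqVlt => /orP [/eqP ->|rM].
  rewrite /sp_grid -mulSnr mulnK // modnMl !mul0r addr0.
  by rewrite mulrAC mulfV ?mul1r ?pnatr_eq0 -?lt0n // addrC subrK.
by rewrite /sp_grid divnMDl // divn_small // addn0 modnMDl modn_small.
Qed.

Lemma sp_grid_index j : (j < n.-1 * M)%N -> ((j %/ M).+1 < n)%N.
Proof. by move=> j_lt; rewrite -ltn_predRL ltn_divLR. Qed.

Lemma sp_gridS j : sp_grid j.+1 = sp_grid j + (t (j %/ M).+1 - t (j %/ M)) / M%:R.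
Proof.
rewrite {1}(divn_eq j M) -addnS sp_gridE ?ltn_pmod // -[(j %% M).+1]addn1 natrD.
by rewrite /sp_grid; ring.
Qed.

Lemma sp_grid_lt j : (j < n.-1 * M)%N -> sp_grid j < sp_grid j.+1.
Proof.
move=> j_lt; rewrite sp_gridS ltrDl divr_gt0 ?ltr0n // subr_gt0.
exact/sp_t_lt/sp_grid_index.
Qed.

Lemma sp_grid_le j l : (j <= l)%N -> (l <= n.-1 * M)%N -> sp_grid j <= sp_grid l.
Proof.
elim: l => [|l IH]; first by rewrite leqn0 => /eqP ->.
rewrite leq_eqVlt => /orP [/eqP -> //|jl] l_lt.
exact/(le_trans (IH jl (ltnW l_lt)))/ltW/sp_grid_lt.
Qed.

Lemma sp_grid_cell j : (j < n.-1 * M)%N ->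
  t (j %/ M) <= sp_grid j /\ sp_grid j.+1 <= t (j %/ M).+1.
Proof.
move=> j_lt; have dt_gt0 : 0 < t (j %/ M).+1 - t (j %/ M).
  by rewrite subr_gt0; exact/sp_t_lt/sp_grid_index.
split; first by rewrite /sp_grid lerDl divr_ge0 // mulr_ge0 // ltW.
rewrite {1}(divn_eq j M) -addnS sp_gridE ?ltn_pmod // -lerBrDl.
by rewrite ler_pdivrMr ?ltr0n // mulrC ler_pM2l // ler_nat ltn_pmod.
Qed.

Lemma sp_grid0 : sp_grid 0 = 0.
Proof. by case: hGm => _ _ [_ t0 _ _] _ _; rewrite /sp_grid div0n mod0n !mul0r addr0. Qed.

Lemma sp_grid_last : sp_grid (n.-1 * M) = T.
Proof. by case: hGm => _ _ [_ _ tT _] _ _; rewrite /sp_grid mulnK // modnMl !mul0r addr0. Qed.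

Lemma sp_grid_itv j : (j <= n.-1 * M)%N -> 0 <= sp_grid j <= T.
Proof.
by move=> j_le; rewrite -{1}sp_grid0 -sp_grid_last !sp_grid_le.
Qed.

Lemma sp_path_grid Z w l : (l <= n.-1 * M)%N ->
  sp_path Gm Z w (sp_grid l) = sp_G0 Gm w (Z w 0) +
    \sum_(j < l) sp_op Gm (j %/ M) w (Z w (sp_grid j.+1) - Z w (sp_grid j)).
Proof.
elim: l => [|l IH] l_le; first by rewrite big_ord0 addr0 sp_grid0 sp_path0.
have [tl tlS] := sp_grid_cell l_le.
rewrite big_ord_recr /= addrA -IH ?(ltnW l_le) // -(sp_pathB _ _ (sp_grid_index l_le)) //.
  by rewrite addrC subrK.
exact/ltW/sp_grid_lt.
Qed.

Lemma sp_grid_near i s eps : (i.+1 < n)%N -> t i <= s < t i.+1 ->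
  t i.+1 - t i < eps * M%:R ->
  exists j, [/\ (j <= n.-1 * M)%N, s < sp_grid j, sp_grid j < s + eps & sp_grid j <= t i.+1].
Proof.
move=> i_lt /andP[tis sti] dt_lt.
set dt := t i.+1 - t i in dt_lt; have dt_gt0 : 0 < dt by rewrite subr_gt0 sp_t_lt.
have M_pos : 0 < M%:R :> R by rewrite ltr0n.
have s_dt : s - t i < dt by rewrite ltrD2r.
pose x := (s - t i) * M%:R / dt.
have xdt : x * dt = (s - t i) * M%:R by rewrite /x mulfVK // gt_eqF.
have x_ge0 : 0 <= x by nra.
have /andP[rx xr] := truncn_itv x_ge0; set r := Num.truncn x in rx xr.
have rM : (r.+1 <= M)%N.
  by rewrite -(ltr_nat R) (le_lt_trans rx) //; nra.
have rMR : r.+1%:R <= M%:R :> R by rewrite ler_nat.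
have rS : r.+1%:R = r%:R + 1 :> R by rewrite -addn1 natrD.
pose q := r.+1%:R * dt / M%:R.
have qM : q * M%:R = r.+1%:R * dt by rewrite /q mulfVK // gt_eqF.
exists (i * M + r.+1)%N; rewrite sp_gridE // -/dt -/q; split.
- apply: (@leq_trans (i.+1 * M)); first by rewrite mulSn addnC leq_add2r.
  by rewrite leq_mul2r ltn_predRL i_lt orbT.
- nra.
- nra.
- rewrite -lerBrDl -/dt; nra.
Qed.

End Grid.

End SimplePrd.

Section Stop.
Context {R : realType} {H : normedModType R} {d : measure_display} {Omega : measurableType d}.
Context (F : R -> set (set Omega)) (T : R) (Gm : @simple_prd R H d Omega).
Hypothesis hGm : is_simple_prd F T Gm.
Variables (M : nat) (dl : R) (Z : Omega -> R -> H).
Hypothesis M_gt0 : (0 < M)%N.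
Local Notation n := (sp_n Gm).
Local Notation grid := (sp_grid Gm M).

Definition grid_below (j : nat) : set Omega :=
  [set w | forall l, (l <= j)%N -> `|sp_path Gm Z w (grid l)| <= dl].

(* [Gm] on the refined grid, switched off from the first grid point at which
   [|Gm . Z|] exceeds [dl]. *)
Definition sp_stop : @simple_prd R H d Omega :=
  SimplePrd (sp_G0 Gm) (n.-1 * M).+1 grid (fun j => sp_N Gm (j %/ M))
    (fun j k => sp_O Gm (j %/ M) k) (fun j k => sp_A Gm (j %/ M) k `&` grid_below j).

Lemma sp_op_stop j w h :
  sp_op sp_stop j w h = (\1_(grid_below j) w : R) *: sp_op Gm (j %/ M) w h.
Proof.
rewrite /sp_op /= scaler_sumr; apply: eq_bigr => k _.
by rewrite indicI scalerA mulrC.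
Qed.

Lemma sp_path_stop w : sp_path sp_stop Z w T = sp_G0 Gm w (Z w 0) +
  \sum_(j < n.-1 * M) (\1_(grid_below j) w : R) *:
    sp_op Gm (j %/ M) w (Z w (grid j.+1) - Z w (grid j)).
Proof.
rewrite /sp_path /sp_int /=; congr (_ + _); apply: eq_bigr => j _.
have /andP[_ gjS] := sp_grid_itv hGm M_gt0 (ltn_ord j).
have /andP[_ gj] := sp_grid_itv hGm M_gt0 (ltnW (ltn_ord j)).
by rewrite sp_op_stop (min_l gjS) (min_l gj).
Qed.

(* Up to the first exceedance the stopped integrand coincides with [Gm]. *)
Lemma sp_path_stop_gt w :
  (exists j, (j <= n.-1 * M)%N /\ dl < `|sp_path Gm Z w (grid j)|) ->
  dl < `|sp_path sp_stop Z w T|.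
Proof.
move=> [j0 [j0_le dl_j0]].
pose P := [pred j | (j <= n.-1 * M)%N && (dl < `|sp_path Gm Z w (grid j)|)].
have [|js /andP[js_le dl_js] min_js] := @ex_minnP P; first by exists j0; rewrite /P /= j0_le.
suff -> : sp_path sp_stop Z w T = sp_path Gm Z w (grid js) by [].
rewrite sp_path_stop (sp_path_grid hGm) //; congr (_ + _).
pose f j := (\1_(grid_below j) w : R) *: sp_op Gm (j %/ M) w (Z w (grid j.+1) - Z w (grid j)).
rewrite -(big_mkord xpredT f) (@big_cat_nat _ _ _ js 0 _ _ f (leq0n js) js_le) /=.
rewrite [X in _ + X]big_nat_cond [X in _ + X]big1 ?addr0; last first.
  move=> j /andP[/andP[js_j _] _]; rewrite /f indicE memNset ?scale0r // => /(_ js js_j).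
  by rewrite leNgt dl_js.
rewrite big_mkord; apply: eq_bigr => j _; rewrite /f indicE mem_set ?scale1r // => l l_le.
rewrite leNgt; apply/negP => dl_l.
have /min_js : P l by rewrite /P /= dl_l andbT (leq_trans l_le) // ltnW // (leq_trans _ js_le).
by rewrite leqNgt (leq_ltn_trans l_le).
Qed.

End Stop.

Section Adapted.
Context {R : realType} {H : normedModType R} {d : measure_display} {Omega : measurableType d}.
Context (F : R -> set (set Omega)) (T : R).
Hypothesis hF : is_filtration F.
Variable e : nat -> H.
Hypothesis de : dense_seq e.
Variables X Y : Omega -> R -> H.
Hypotheses (hX : adapted_cadlag F T X) (hY : adapted_cadlag F T Y).
Local Notation Z := (proc_diff X Y).

Let sF s : sigma_algebra setT (F s). Proof. by case: hF. Qed.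

Let F_mono s u : s <= u -> F s `<=` F u. Proof. by case: hF => _ _; apply. Qed.

Lemma proc_diff_meas_wrt u s : 0 <= u <= s -> s <= T -> meas_wrt (F s) (fun w => Z w u).
Proof.
move=> /andP[u_ge0 us] sT; have u_itv : 0 <= u <= T by rewrite u_ge0 (le_trans us).
apply: meas_wrtS (F_mono us) _; rewrite /proc_diff.
by case: hX hY => mX _ [mY _]; exact: (meas_wrtB (sF u) de (mX u u_itv) (mY u u_itv)).
Qed.

Variable Gm : @simple_prd R H d Omega.
Hypothesis hGm : is_simple_prd F T Gm.
Local Notation t := (sp_t Gm).
Local Notation n := (sp_n Gm).

Lemma sp_op_meas_wrt i h : (i.+1 < n)%N -> meas_wrt (F (t i)) (fun w => sp_op Gm i w h).
Proof.
case: hGm => _ _ _ hO _ i_lt.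
apply: (meas_wrt_sum (sF _) de (f := fun k w => (\1_(sp_A Gm i k) w : R) *: sp_O Gm i k h)).
move=> k k_lt; have [_ FA] := hO i k i_lt k_lt.
exact: (meas_wrt_indic (sF _) FA (meas_wrt_cst (sF _) _)).
Qed.

Lemma sp_path_meas_wrt s : 0 <= s <= T -> meas_wrt (F s) (fun w => sp_path Gm Z w s).
Proof.
move=> /andP[s_ge0 sT]; apply: (meas_wrtD (sF s) de).
  apply: (meas_wrt_comp_contract (sF s) de (K := sp_G0 Gm)) => [w h h'||].
  - exact: sp_G0_contract hGm _ _ _.
  - by case: hGm => _ mG0 _ _ _ k; apply: meas_wrtS (mG0 _); exact: F_mono.
  - by apply: proc_diff_meas_wrt; rewrite // lexx.
pose f i w := sp_op Gm i w (Z w (Num.min (t i.+1) s) - Z w (Num.min (t i) s)).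
apply: (meas_wrt_sum (sF s) de (f := f)) => i; rewrite ltn_predRL => i_lt.
have [tis|sti] := leP (t i) s; last first.
  have stS : s <= t i.+1 by rewrite (le_trans (ltW sti)) // (sp_t_le hGm).
  rewrite /f (min_r stS) (min_r (ltW sti)).
  by under eq_fun do rewrite subrr (sp_op0 hGm) //; exact: meas_wrt_cst.
apply: (meas_wrt_comp_contract (sF s) de (K := sp_op Gm i)) => [w h h'||].
- exact: (sp_op_contract hGm).
- by move=> k; apply: meas_wrtS (F_mono tis) _; exact: sp_op_meas_wrt.
- have ti_ge0 := sp_t_ge0 hGm (ltnW i_lt).
  apply: (meas_wrtB (sF s) de); apply: proc_diff_meas_wrt => //.
    by rewrite le_min ge_min lexx orbT s_ge0 (le_trans ti_ge0) // (sp_t_le hGm).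
  by rewrite (min_l tis) ti_ge0.
Qed.

Lemma sp_path_norm_le_meas s (r : R) : 0 <= s <= T -> F s [set w | `|sp_path Gm Z w s| <= r].
Proof.
move=> s_itv.
have -> : [set w | `|sp_path Gm Z w s| <= r] =
    ~` ((fun w => sp_path Gm Z w s) @^-1` [set v | r < `|v|]).
  by apply/seteqP; split=> w /=; rewrite leNgt; move/negP.
exact/(sigma_algebra_setC (sF s))/sp_path_meas_wrt/open_norm_gt.
Qed.

Variables (M : nat) (dl : R).
Hypothesis M_gt0 : (0 < M)%N.

Lemma grid_below_meas j : (j <= n.-1 * M)%N -> F (sp_grid Gm M j) (grid_below Gm M dl Z j).
Proof.
elim: j => [|j IH] j_le.
  have -> : grid_below Gm M dl Z 0 = [set w | `|sp_path Gm Z w (sp_grid Gm M 0)| <= dl].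
    by apply/seteqP; split=> w /= => [/(_ 0%N (leqnn 0))|dl_w l]; rewrite // leqn0 => /eqP ->.
  exact/sp_path_norm_le_meas/(sp_grid_itv hGm M_gt0).
have -> : grid_below Gm M dl Z j.+1 = grid_below Gm M dl Z j `&`
    [set w | `|sp_path Gm Z w (sp_grid Gm M j.+1)| <= dl].
  apply/seteqP; split=> w /= => [below|[below dl_w] l].
    by split=> [l /leqW|]; apply: below.
  by rewrite leq_eqVlt => /orP [/eqP -> //|]; exact: below.
apply: (sigma_algebraI (sF _)); last exact/sp_path_norm_le_meas/(sp_grid_itv hGm M_gt0).
apply: F_mono (IH (ltnW j_le)); exact/ltW/(sp_grid_lt hGm M_gt0).
Qed.

Lemma sp_stop_simple : is_simple_prd F T (sp_stop Gm M dl Z).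
Proof.
case: hGm => G0_op G0_meas [n_gt0 t0 tT t_lt] hO op_norm; split=> //=.
- split=> //; [exact: sp_grid0 | exact: sp_grid_last | move=> j].
  by rewrite ltnS; exact: sp_grid_lt.
- move=> j k; rewrite ltnS => j_lt k_lt.
  have [bO FA] := hO _ k (sp_grid_index M_gt0 j_lt) k_lt; split=> //.
  apply: (sigma_algebraI (sF _)); last exact: grid_below_meas (ltnW j_lt).
  by apply: F_mono FA; have [] := sp_grid_cell hGm M_gt0 j_lt.
- move=> w j; rewrite ltnS => j_lt h; rewrite sp_op_stop indicE.
  case: (w \in _); rewrite ?scale1r ?scale0r ?normr0 //.
  exact: (op_norm w _ (sp_grid_index M_gt0 j_lt) h).
Qed.

End Adapted.

Lemma cvg_at_right_norm_lt {R : realType} {H : normedModType R} (f : R -> H) (s eta : R) :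
  0 < eta -> f x @[x --> s^'+] --> f s ->
  exists2 eps : R, 0 < eps & forall u, s < u < s + eps -> `|f u - f s| < eta.
Proof.
move=> eta_gt0 /cvgr_dist_lt /(_ _ eta_gt0) /nbhs_ballP [eps eps_gt0 near_s].
exists eps => // u /andP[su ueps]; rewrite distrC; apply: near_s => //.
by rewrite -ball_normE /= ltr_norml; apply/andP; split; lra.
Qed.

Section GridExceedance.
Context {R : realType} {H : normedModType R} {d : measure_display} {Omega : measurableType d}.
Context (F : R -> set (set Omega)) (T : R) (Gm : @simple_prd R H d Omega).
Hypothesis hGm : is_simple_prd F T Gm.
Variables X Y : Omega -> R -> H.
Hypotheses (hX : adapted_cadlag F T X) (hY : adapted_cadlag F T Y).
Local Notation Z := (proc_diff X Y).
Local Notation t := (sp_t Gm).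
Local Notation n := (sp_n Gm).

(* Right continuity of [X - Y] transfers to [Gm . Z] inside a cell, so an exceedance
   at [s] persists slightly to the right of [s], where fine grids have a point. *)
Lemma sp_path_gt_on_grids w s dl : 0 <= s <= T -> dl < `|sp_path Gm Z w s| ->
  \forall k \near \oo, exists j,
    (j <= n.-1 * k.+1)%N /\ dl < `|sp_path Gm Z w (sp_grid Gm k.+1 j)|.
Proof.
move=> /andP[s_ge0 sT] dl_s; have [sT'|sT'] := eqVneq s T.
  apply: nearW => k; exists (n.-1 * k.+1)%N; split=> //.
  by rewrite (sp_grid_last hGm) // -sT'.
have s_lt : 0 <= s < T by rewrite s_ge0 lt_neqAle sT' sT.
have [i [i_lt tis sti]] := sp_interval hGm s_lt.
have cZ : Z w x @[x --> s^'+] --> Z w s.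
  by case: hX hY => _ /(_ w) [cX _] [_ /(_ w) [cY _]]; apply: cvgB; [exact: cX | exact: cY].
have eta_gt0 : 0 < `|sp_path Gm Z w s| - dl by rewrite subr_gt0.
have [eps eps_gt0 Zeps] := cvg_at_right_norm_lt eta_gt0 cZ.
have [m _ hm] := nbhs_infty_gtr ((t i.+1 - t i) / eps).
exists m => // k /= /hm dt_k.
have dt_lt : t i.+1 - t i < eps * k.+1%:R.
  by rewrite mulrC -ltr_pdivrMr // (lt_le_trans dt_k) // ler_nat.
have [j [j_le sj jeps jt]] := sp_grid_near hGm (ltn0Sn k) i_lt (introT andP (conj tis sti)) dt_lt.
exists j; split=> //; set u := sp_grid Gm k.+1 j in sj jeps jt *.
have op_le : `|sp_op Gm i w (Z w u - Z w s)| <= `|Z w u - Z w s|.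
  by rewrite (sp_opB hGm) // (sp_op_contract hGm).
have := Zeps u (introT andP (conj sj jeps)).
have := ler_normD (sp_path Gm Z w s - sp_path Gm Z w u) (sp_path Gm Z w u).
by rewrite subrK distrC (sp_pathB hGm Z w i_lt tis (ltW sj) jt); lra.
Qed.

End GridExceedance.

Section MeasureFacts.
Context {d : measure_display} {T : measurableType d} {R : realType}.
Variable mu : {measure set T -> \bar R}.
Local Open Scope ereal_scope.

Lemma ge0_le_integralT (f g : T -> \bar R) :
  (forall x, 0 <= f x) -> (forall x, f x <= g x) -> \int[mu]_x f x <= \int[mu]_x g x.
Proof.
move=> f_ge0 fg; have g_ge0 x : 0 <= g x by exact: le_trans (f_ge0 x) (fg x).
rewrite !ge0_integralTE //; apply: ereal_sup_le => _ [h hf <-].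
by exists h => // x; exact: le_trans (hf x) (fg x).
Qed.

Lemma measure_bigcup_bigcap_le (A : (set T)^nat) (c : \bar R) :
  (forall k, measurable (A k)) -> (forall k, mu (A k) <= c) ->
  mu (\bigcup_m \bigcap_(k in [set k | (m <= k)%N]) A k) <= c.
Proof.
move=> mA muA; pose B m := \bigcap_(k in [set k | (m <= k)%N]) A k.
have mB m : measurable (B m) by apply: bigcap_measurable => [|k _]; [exists m => /= | exact: mA].
have ndB : {homo B : m m' / (m <= m')%N >-> (m <= m')%O}.
  by move=> m m' mm'; apply/subsetPset => w Bw k /= /(leq_trans mm'); exact: Bw.
have muB := @nondecreasing_cvg_mu _ _ _ mu B mB (bigcupT_measurable _ mB) ndB.
rewrite -(cvg_lim _ muB) //; apply: lime_le; first by apply/cvg_ex; eexists; exact: muB.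
apply: nearW => m; apply: le_trans (muA m); apply: le_measure; rewrite ?inE //.
by move=> w /(_ m (leqnn m)).
Qed.

End MeasureFacts.

Lemma dist_open_dominated {R : realType} {E : Type} (S : set E) (d1 d2 : E -> E -> \bar R)
    (U : set E) :
  (forall r : R, 0 < r -> exists2 s : R, 0 < s &
     forall x y, S x -> S y -> (d1 x y < s%:E)%E -> (d2 x y < r%:E)%E) ->
  dist_open S d2 U -> dist_open S d1 U.
Proof.
move=> dom open2 x Sx Ux; have [r [r_gt0 ball_r]] := open2 x Sx Ux.
have [s s_gt0 d1d2] := dom r r_gt0; exists s; split=> // y Sy d1_xy.
exact: ball_r (d1d2 x y Sx Sy d1_xy).
Qed.

Section EmDistances.
Context {R : realType} {H : normedModType R} {d : measure_display} {Omega : measurableType d}.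
Variable P : probability Omega R.
Context (F : R -> set (set Omega)) (T : R).
Implicit Types X Y : Omega -> R -> H.

Lemma rho_em_le_d_em X Y : (rho_em P F T X Y <= d_em P F T X Y)%E.
Proof.
apply: ge_ereal_sup => _ [G hG <-].
apply: (@le_trans _ _ (\int[P]_w ereal_sup [set (Num.min `|sp_path G (proc_diff X Y) w t| 1)%:E
    | t in [set t | (0 <= t <= T)%R]])%E); last by apply: ereal_sup_ubound; exists G.
apply: ge0_le_integralT => w; first by rewrite lee_fin le_min normr_ge0 ler01.
by apply: ereal_sup_ubound; exists T => //=; rewrite lexx (sp_T_ge0 hG).
Qed.

Hypothesis hF : is_filtration F.
Variable e : nat -> H.
Hypothesis de : dense_seq e.
Variables X Y : Omega -> R -> H.
Hypotheses (hX : adapted_cadlag F T X) (hY : adapted_cadlag F T Y).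
Local Notation Z := (proc_diff X Y).
Variables (dl c : R).
Hypotheses (dl_gt0 : 0 < dl) (dl_le1 : dl <= 1) (rho_le : (rho_em P F T X Y <= c%:E)%E).

Section FixedIntegrand.
Variable Gm : @simple_prd R H d Omega.
Hypothesis hGm : is_simple_prd F T Gm.
Local Notation n := (sp_n Gm).

Let grid_exceed k := ~` grid_below Gm k.+1 dl Z (n.-1 * k.+1).

Let grid_exceed_meas k : measurable (grid_exceed k).
Proof.
apply: measurableC; case: hF => _ + _; apply.
exact: (grid_below_meas hF de hX hY hGm dl (ltn0Sn k) (leqnn _)).
Qed.

(* Markov's inequality for the stopped integrand, which is admissible in [rho_em]. *)
Let grid_exceed_le k : (P (grid_exceed k) <= (c / dl)%:E)%E.
Proof.
pose Gs := sp_stop Gm k.+1 dl Z.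
have int_le : (\int[P]_(w in grid_exceed k) dl%:E <=
    \int[P]_w (Num.min `|sp_path Gs Z w T| 1)%:E)%E.
  rewrite integral_mkcond; apply: ge0_le_integralT => w.
    by rewrite patchE; case: ifP; rewrite lee_fin // ltW.
  rewrite patchE; case: ifPn => [/set_mem|_]; last by rewrite lee_fin le_min normr_ge0 ler01.
  move=> /existsNP [j /not_implyP [j_le /negP]]; rewrite -ltNge => dl_j.
  by rewrite lee_fin le_min dl_le1 andbT ltW // (sp_path_stop_gt hGm) //; exists j.
have Gs_le : (\int[P]_w (Num.min `|sp_path Gs Z w T| 1)%:E <= c%:E)%E.
  apply: le_trans rho_le; apply: ereal_sup_ubound; exists Gs => //.
  exact: (sp_stop_simple hF de hX hY hGm dl (ltn0Sn k)).
have := le_trans int_le Gs_le; rewrite integral_cst //.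
by rewrite mulrC EFinM lee_pdivlMl.
Qed.

Let exceed_often :=
  \bigcup_m \bigcap_(k in [set k | (m <= k)%N]) grid_exceed k.

Let exceed_often_meas : measurable exceed_often.
Proof.
apply: bigcupT_measurable => m; apply: bigcap_measurable => [|k _]; last exact: grid_exceed_meas.
by exists m => /=.
Qed.

Let exceed_often_le : (P exceed_often <= (c / dl)%:E)%E.
Proof. exact: measure_bigcup_bigcap_le grid_exceed_meas grid_exceed_le. Qed.

Let sup_path_le w : (ereal_sup [set (Num.min `|sp_path Gm Z w t| 1)%:E
    | t in [set t | (0 <= t <= T)%R]] <= dl%:E + (\1_exceed_often w)%:E)%E.
Proof.
apply: ge_ereal_sup => _ [s s_itv <-] /=; rewrite indicE.
have [Uw|Uw] := pselect (exceed_often w).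
  by rewrite mem_set // mulr1n -EFinD lee_fin ge_min lerDr (ltW dl_gt0) orbT.
rewrite memNset // adde0 lee_fin leNgt; apply/negP; rewrite lt_min => /andP[dl_s _].
have [m _ hm] := sp_path_gt_on_grids hGm hX hY s_itv dl_s.
apply: Uw; exists m => // k /= m_le below; have [j [j_le dl_j]] := hm k m_le.
by have := below j j_le; rewrite leNgt dl_j.
Qed.

Lemma integral_sup_path_le : (\int[P]_w ereal_sup [set (Num.min `|sp_path Gm Z w t| 1)%:E
    | t in [set t | (0 <= t <= T)%R]] <= (dl + c / dl)%:E)%E.
Proof.
have sup_ge0 w : (0 <= ereal_sup [set (Num.min `|sp_path Gm Z w t| 1)%:E
    | t in [set t | (0 <= t <= T)%R]])%E.
  apply: le_ereal_sup_tmp; exists (Num.min `|sp_path Gm Z w 0| 1)%:E.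
    by exists 0 => //=; rewrite lexx (sp_T_ge0 hGm).
  by rewrite lee_fin le_min normr_ge0 ler01.
apply: le_trans (ge0_le_integralT P sup_ge0 sup_path_le) _.
have dl_ge0 w : [set: Omega] w -> (0 <= cst dl%:E w)%E by move=> _; rewrite lee_fin ltW.
have indic_ge0 w : [set: Omega] w -> (0 <= (\1_exceed_often w : R)%:E)%E.
  by move=> _; rewrite lee_fin indicE ler0n.
have indic_meas := (measurable_EFinP _ _).2 (@measurable_indic _ _ R setT _ exceed_often_meas).
have int_dl : (\int[P]_w cst dl%:E w = dl%:E)%E.
  by rewrite integral_cst // -[RHS]mule1; congr (_ * _)%E; exact: probability_setT.
rewrite (ge0_integralD P measurableT dl_ge0 (measurable_cst _) indic_ge0 indic_meas) int_dl.
by rewrite integral_indic // setIT EFinD; exact: leeD (lexx _) exceed_often_le.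
Qed.

End FixedIntegrand.

Lemma d_em_le : (d_em P F T X Y <= (dl + c / dl)%:E)%E.
Proof. by apply: ge_ereal_sup => _ [G hG <-]; exact: integral_sup_path_le. Qed.

End EmDistances.

Theorem lemma2p4 (R : realType) (H : completeNormedModType R)
  (ip : H -> H -> R) (d : measure_display) (Omega : measurableType d)
  (P : probability Omega R) (F : R -> set (set Omega)) (T : R) :
  is_inner_product ip -> @separable_space R H ->
  is_filtration F -> complete_fps P F -> 0 < T ->
  forall U : set (Omega -> R -> H),
    U `<=` adapted_cadlag F T ->
    (dist_open (adapted_cadlag F T) (rho_em P F T) U <->
     dist_open (adapted_cadlag F T) (d_em P F T) U).
Proof.
move=> _ sep hF _ _ U _; have [e de] := separable_dense_seq sep.
split; apply: dist_open_dominated => r r_gt0.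
  by exists r => // X Y _ _; apply: le_lt_trans (rho_em_le_d_em P F T X Y).
pose dl := Num.min (r / 2) (1 / 2).
have dl_gt0 : 0 < dl by rewrite lt_min !divr_gt0.
have dl_le1 : dl <= 1 by rewrite ge_min; apply/orP; right; lra.
have dl_r : dl <= r / 2 by rewrite ge_min lexx.
exists (dl * r / 4); first by rewrite !divr_gt0 ?mulr_gt0.
move=> X Y hX hY rho_lt.
apply: le_lt_trans (d_em_le hF de hX hY dl_gt0 dl_le1 (ltW rho_lt)) _.
have -> : dl * r / 4 / dl = r / 4 by rewrite mulrAC [dl * r]mulrC mulfK // gt_eqF.
by rewrite lte_fin; lra.
Qed.
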